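(* Let $L\in R[x][\partial]$ have order $r>0$, and let $p\in R[x]$ be a primitive polynomial dividing $\mathrm{lc}_\partial(L)$. If there exists a $p$-removing operator for $L$ over $Q_R[x]$, then there exists a $p$-removing operator for $L$ over $R[x]$ of the same order.
   Context: $R$ is a principal ideal domain with quotient field $Q_R$; $\sigma$ is an $R$-automorphism of $R[x]$ with $\sigma(x)=\gamma x+\tau$ ($\gamma$ a unit), $\delta$ an $R$-linear $\sigma$-derivation with $\deg\delta(x)\le1$; $R[x][\partial]$ is the Ore algebra with $\partial p=\sigma(p)\partial+\delta(p)$, contained in $Q_R[x][\partial]\subseteq Q_R(x)[\partial]$. Primitive: coefficients have gcd $1$. For a coefficient ring $D\in\{R[x],Q_R[x]\}$ and $p\in D$ dividing $\mathrm{lc}_\partial(L)$, a $p$-removing operator for $L$ over $D$ of order $k$ is $P\in Q_R(x)[\partial]$ of order $k$ such that $PL\in D[\partial]$ and $\sigma^{-k}(\mathrm{lc}_\partial(PL))=\frac{w}{vp}\mathrm{lc}_\partial(L)$ for some $w,v\in D$ with $\gcd(p,w)=1$ in $D$. *)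

From HB Require Import structures.
From mathcomp Require Import all_boot all_order all_algebra fraction.
Set Implicit Arguments. Unset Strict Implicit. Unset Printing Implicit Defensive.
Import Order.TTheory GRing.Theory Num.Theory.
Local Open Scope ring_scope.

Notation ratfunK R := ({fraction {poly {fraction R}}}).

Definition dvd_in (D : comNzRingType) (a b : D) : Prop := exists c : D, b = c * a.

Definition coprime_in (D : comUnitRingType) (a b : D) : Prop :=
  forall d : D, dvd_in d a -> dvd_in d b -> d \is a GRing.unit.

Definition PID (R : idomainType) : Prop :=
  forall I : R -> Prop, I 0 ->
    (forall a b, I a -> I b -> I (a + b)) ->
    (forall c a, I a -> I (c * a)) ->
    exists g : R, forall a, I a <-> dvd_in g a.

Definition primitive (R : idomainType) (p : {poly R}) : Prop :=
  forall d : R, (forall i, dvd_in d p`_i) -> d \is a GRing.unit.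

Section Ore.
Variable R : idomainType.
Local Notation QR := {fraction R}.
Local Notation K := (ratfunK R).

Definition fracQ (c : R) : QR := FracField.tofrac c.
Definition embQ (q : {poly QR}) : K := FracField.tofrac q.
Definition embRx (q : {poly R}) : K := embQ (map_poly fracQ q).
Definition embR (c : R) : K := embRx c%:P.
Definition xK : K := embQ 'X.

(* The standing assumptions: sigma is (the extension to Q_R(x) of) the
   R-automorphism of R[x] with sigma(x) = gamma x + tau, gamma a unit,
   sigma_inv its inverse; delta is (the extension to Q_R(x) of) an R-linear
   sigma-derivation with deg delta(x) <= 1. *)
Definition ore_setting (gamma tau : R) (sigma sigma_inv delta : K -> K) : Prop :=
  [/\ gamma \is a GRing.unit,
      [/\ forall a b, sigma (a + b) = sigma a + sigma b,
          forall a b, sigma (a * b) = sigma a * sigma b,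
          sigma 1 = 1,
          cancel sigma sigma_inv & cancel sigma_inv sigma],
      (forall c : R, sigma (embR c) = embR c),
      sigma xK = embRx (gamma *: 'X + tau%:P) &
      [/\ forall a b, delta (a + b) = delta a + delta b,
          forall a b, delta (a * b) = sigma a * delta b + delta a * b,
          forall c : R, delta (embR c) = 0
        & exists q : {poly R}, (size q <= 2)%N /\ delta xK = embRx q]].

Variables (sigma sigma_inv delta : K -> K).

(* Operators in Q_R(x)[D] are represented by their coefficient polynomial
   sum_i P`_i D^i (the additive structure of {poly K}); the product is the
   Ore product with D a = sigma(a) D + delta(a). *)
Definition dmul (Q : {poly K}) : {poly K} :=
  map_poly sigma Q * 'X + map_poly delta Q.

Definition omul (P L : {poly K}) : {poly K} :=
  \sum_(i < size P) P`_i *: iter i dmul L.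

Definition removing (D : comUnitRingType) (emb : D -> K) (p : D)
    (L P : {poly K}) (k : nat) : Prop :=
  [/\ size P = k.+1,
      exists M : {poly D}, omul P L = map_poly emb M
    & exists w v : D, [/\ v != 0, coprime_in p w &
        iter k sigma_inv (lead_coef (omul P L))
          = emb w / (emb v * emb p) * lead_coef L]].

End Ore.

From HB Require Import structures.
From mathcomp Require Import all_boot all_order all_algebra fraction.
From mathcomp Require Import generic_quotient ring.
Set Implicit Arguments. Unset Strict Implicit. Unset Printing Implicit Defensive.
Import GRing.Theory.
Local Open Scope ring_scope.

(** Multiplying a p-removing operator P over Q_R[x] by a nonzero constant
  c of R that clears the denominators of PL gives an operator over R[x].
  Constants commute with sigma, so the leading-coefficient identity survives
  after clearing the denominators of w and v by constants as well.  The
  coprimality with p descends from Q_R[x] to R[x]: a common divisor of p and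
  w in R[x] becomes a unit of Q_R[x], hence is a constant, and a constant
  dividing the primitive p is a unit of R. *)

Lemma fraction_numden (R : idomainType) (x : {fraction R}) :
  exists2 d : R, d != 0 & exists n : R, x = tofrac n / tofrac d.
Proof.
exists (\d_(repr x)); first exact: denom_ratioP.
exists (\n_(repr x)); rewrite -{1}[x]reprK.
have -> : forall a b : {fraction R}, a / b = FracField.mul a (FracField.inv b)
  by [].
rewrite !piE; apply/eqmodP => /=.
rewrite /FracField.equivf /FracField.mulf /FracField.invf.
by rewrite !numden_Ratio ?(oner_neq0, mul1r, mulr1, denom_ratioP) // mulrC.
Qed.

Definition clearable (R : idomainType) (U V : comNzRingType)
    (j : U -> V) (iota : R -> U) (v : V) : Prop :=
  exists2 c : R, c != 0 & exists u : U, j u = j (iota c) * v.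

Section ClearDenominators.
Variables (R : idomainType) (U V : comNzRingType).
Variables (j : {rmorphism U -> V}) (iota : {rmorphism R -> U}).

Lemma clearable_poly : (forall v, clearable j iota v) ->
  forall q : {poly V}, clearable (map_poly j) (polyC \o iota) q.
Proof.
move=> clearV; elim/poly_ind => [|q a [c1 c1_neq0 [u1 u1E]]].
  by exists 1; [exact: oner_neq0 | exists 0; rewrite !rmorph0 mulr0].
have [c2 c2_neq0 [u2 u2E]] := clearV a.
exists (c1 * c2); first by rewrite mulf_neq0.
exists ((iota c2)%:P * u1 * 'X + (iota c1 * u2)%:P).
rewrite rmorphD /= !rmorphM /= map_polyX !map_polyC /= u1E u2E.
by rewrite !map_polyC polyCM; ring.
Qed.

End ClearDenominators.

Lemma dvd_in_rmorph (D E : comNzRingType) (f : {rmorphism D -> E}) (a b : D) :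
  dvd_in a b -> dvd_in (f a) (f b).
Proof. by case=> c ->; exists (f c); rewrite rmorphM. Qed.

Lemma coprime_in_mulr_unit (D : comUnitRingType) (a b u : D) :
  u \is a GRing.unit -> coprime_in a b -> coprime_in a (u * b).
Proof.
move=> u_unit cop d dvd_da [e de]; apply: (cop _ dvd_da).
by exists (u^-1 * e); rewrite -mulrA -de mulKr.
Qed.

Lemma divf_mull (F : fieldType) (a x y : F) : a != 0 -> a * x / (a * y) = x / y.
Proof. by move=> a_neq0; rewrite invfM mulrACA divff ?mul1r. Qed.

Section FractionEmbeddings.
Variable R : idomainType.
Local Notation QR := {fraction R}.
Local Notation K := (ratfunK R).

HB.instance Definition _ := GRing.RMorphism.copy (@fracQ R) (@FracField.tofrac R).
HB.instance Definition _ := GRing.RMorphism.copy (@embQ R) (@FracField.tofrac _).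
HB.instance Definition _ :=
  GRing.RMorphism.copy (@embRx R) (@embQ R \o map_poly (@fracQ R)).

Lemma fracQ_inj : injective (@fracQ R).
Proof. by move=> x y /eqP; rewrite tofrac_eq => /eqP. Qed.

Lemma embRx_eq0 (q : {poly R}) : (embRx q == 0) = (q == 0).
Proof.
by rewrite /embRx /embQ tofrac_eq0 -!size_poly_eq0 size_map_inj_poly ?rmorph0 //;
  apply: fracQ_inj.
Qed.

Lemma embR_neq0 (c : R) : c != 0 -> embR c != 0.
Proof. by rewrite /embR embRx_eq0 polyC_eq0. Qed.

Lemma embR_embQ (c : R) : embR c = embQ (fracQ c)%:P.
Proof. by rewrite /embR /embRx map_polyC. Qed.

Lemma clearable_fraction (x : QR) : clearable (@fracQ R) idfun x.
Proof.
have [d d_neq0 [n ->]] := fraction_numden x.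
by exists d => //; exists n; rewrite mulrC mulfVK // tofrac_eq0.
Qed.

Lemma clear_denom_poly (q : {poly QR}) : exists2 c : R, c != 0 &
  exists q' : {poly R}, map_poly (@fracQ R) q' = (fracQ c)%:P * q.
Proof.
have [c c_neq0 [q' q'E]] := clearable_poly clearable_fraction q.
by exists c => //; exists q'; rewrite q'E map_polyC.
Qed.

Lemma clear_denom_poly2 (M : {poly {poly QR}}) : exists2 c : R, c != 0 &
  exists M' : {poly {poly R}},
    map_poly (map_poly (@fracQ R)) M' = (fracQ c)%:P%:P * M.
Proof.
have [c c_neq0 [M' M'E]] :=
  clearable_poly (clearable_poly clearable_fraction) M.
by exists c => //; exists M'; rewrite M'E /= map_polyC /= map_polyC.
Qed.

Lemma embRx_clear_denom (c : R) (q' : {poly R}) (q : {poly QR}) :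
  map_poly (@fracQ R) q' = (fracQ c)%:P * q -> embRx q' = embR c * embQ q.
Proof. by move=> q'E; rewrite embR_embQ /embRx q'E rmorphM. Qed.

Lemma map_embRx_clear_denom (c : R) (M' : {poly {poly R}})
    (M : {poly {poly QR}}) :
  map_poly (map_poly (@fracQ R)) M' = (fracQ c)%:P%:P * M ->
  map_poly (@embRx R) M' = embR c *: map_poly (@embQ R) M.
Proof.
move=> M'E.
rewrite -[@embRx R]/(@embQ R \o map_poly (@fracQ R)) map_poly_comp M'E.
by rewrite embR_embQ rmorphM /= map_polyC mul_polyC.
Qed.

Lemma embRx_clear_denom_div (a b : R) (w' v' : {poly R}) (w v : {poly QR})
    (z : K) :
  a != 0 -> b != 0 ->
  map_poly (@fracQ R) w' = (fracQ a)%:P * w ->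
  map_poly (@fracQ R) v' = (fracQ b)%:P * v ->
  embRx (b%:P * w') / (embRx (a%:P * v') * z) = embQ w / (embQ v * z).
Proof.
move=> a_neq0 b_neq0 w'E v'E.
rewrite !rmorphM /= (embRx_clear_denom w'E) (embRx_clear_denom v'E).
rewrite -[embRx a%:P]/(embR a) -[embRx b%:P]/(embR b).
rewrite -[_ * _ * z]mulrA -[embR b * _ * z]mulrA [embR b * _]mulrCA.
by rewrite !divf_mull ?embR_neq0.
Qed.

Lemma coprime_in_frac_primitive (p w : {poly R}) : primitive p ->
  coprime_in (map_poly (@fracQ R) p) (map_poly (@fracQ R) w) -> coprime_in p w.
Proof.
move=> prim_p cop d dvd_dp dvd_dw.
have: map_poly (@fracQ R) d \is a GRing.unit.
  by apply: cop; apply: dvd_in_rmorph.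
rewrite !poly_unitE size_map_inj_poly ?rmorph0 //; last exact: fracQ_inj.
case/andP=> /eqP size_d _; rewrite size_d eqxx /=.
apply: prim_p => i; have [e ->] := dvd_dp; exists e`_i.
by rewrite {1}[d]size1_polyC ?size_d // coefMC.
Qed.

End FractionEmbeddings.

Lemma omulZ (R : idomainType) (sigma delta : ratfunK R -> ratfunK R)
    (a : ratfunK R) (P L : {poly ratfunK R}) :
  omul sigma delta (a *: P) L = a *: omul sigma delta P L.
Proof.
have [->|a_neq0] := eqVneq a 0.
  by rewrite !scale0r /omul size_poly0 big_ord0.
rewrite /omul size_scale // scaler_sumr; apply: eq_bigr => i _.
by rewrite coefZ scalerA.
Qed.

Lemma ore_iter_sigma_inv_embRM (R : idomainType) (gamma tau : R)
    (sigma sigma_inv delta : ratfunK R -> ratfunK R) :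
  ore_setting gamma tau sigma sigma_inv delta ->
  forall k c x, iter k sigma_inv (embR c * x) = embR c * iter k sigma_inv x.
Proof.
case=> _ [_ sigmaM _ sigmaK sigma_invK] sigmaC _ _.
have sigma_invM x y : sigma_inv (x * y) = sigma_inv x * sigma_inv y.
  by rewrite -{1}(sigma_invK x) -{1}(sigma_invK y) -sigmaM sigmaK.
have sigma_invC c : sigma_inv (embR c) = embR c by rewrite -{1}sigmaC sigmaK.
by move=> k c x; elim: k => //= k ->; rewrite sigma_invM sigma_invC.
Qed.

Theorem mainTheorem17 (R : idomainType) (hR : PID R) (gamma tau : R)
    (sigma sigma_inv delta : ratfunK R -> ratfunK R)
    (hore : ore_setting gamma tau sigma sigma_inv delta)
    (L : {poly {poly R}}) (hL : (1 < size L)%N)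
    (p : {poly R}) (hp : primitive p) (hpL : dvd_in p (lead_coef L))
    (k : nat) :
  (exists P : {poly ratfunK R},
      removing sigma sigma_inv delta (@embQ R) (map_poly (@fracQ R) p)
        (map_poly (@embRx R) L) P k) ->
  exists P : {poly ratfunK R},
      removing sigma sigma_inv delta (@embRx R) p
        (map_poly (@embRx R) L) P k.
Proof.
move=> [P [sizeP [M PL_M] [w [v [v_neq0 cop_pw lcPL]]]]].
have [c c_neq0 [M' M'E]] := clear_denom_poly2 M.
have [a a_neq0 [w' w'E]] := clear_denom_poly w.
have [b b_neq0 [v' v'E]] := clear_denom_poly v.
exists (embR c *: P); split.
- by rewrite size_scale ?embR_neq0.
- by exists M'; rewrite omulZ PL_M (map_embRx_clear_denom M'E).
exists (c%:P * (b%:P * w')), (a%:P * v'); split.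
- rewrite mulf_neq0 ?polyC_eq0 // -embRx_eq0 (embRx_clear_denom v'E).
  by rewrite mulf_neq0 ?embR_neq0 // /embQ tofrac_eq0.
- apply: coprime_in_frac_primitive => //.
  rewrite !rmorphM /= !map_polyC w'E !mulrA -!polyCM.
  apply: coprime_in_mulr_unit => //; apply: rmorph_unit.
  by rewrite unitfE !mulf_neq0 // /fracQ tofrac_eq0.
rewrite omulZ lead_coefZ (ore_iter_sigma_inv_embRM hore) lcPL.
rewrite -(embRx_clear_denom_div _ a_neq0 b_neq0 w'E v'E).
by rewrite [embRx (c%:P * _)]rmorphM !mulrA.
Qed.
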